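(* Consider the generic SURQT model (6) described in the context, and let $\mathbf{Q}_1=\frac{\partial\mathbf{f}(\mathbf 0)}{\partial\mathbf{x}}-\mathbf{D}_\theta$. If $s(\mathbf{Q}_1)<0$, then the rumor-free equilibrium $\mathbf{E}_0=(\mathbf 0,\mathbf 1)$ attracts $\Omega$: every solution with initial value in $\Omega$ satisfies $\mathbf{R}(t)\to\mathbf 0$ and $\mathbf{T}(t)\to\mathbf 1$ as $t\to\infty$. Consequently $R(t)=\frac1N\sum_iR_i(t)\to0$ and $T(t)=\frac1N\sum_iT_i(t)\to1$.
   Context: $V=\{1,\dots,N\}$; $G_R=(V,E_R)$ and $G_T=(V,E_T)$ are strongly connected directed graphs. $\theta_i>0,\delta_i>0$; $\mathbf{D}_\theta=\mathrm{diag}(\theta_i)$. The functions $f_i^T,g_i^R:\mathbb{R}^N\to\mathbb{R}$ satisfy: (C1) $f_i^T$ depends on $x_j$ iff $(i,j)\in E_R$, $g_i^R$ depends on $x_j$ iff $(i,j)\in E_T$; (C2) $f_i^T(\mathbf 0)=g_i^R(\mathbf 0)=0$; (C3) twice continuously differentiable; (C4) strictly increasing in each argument; (C5) concave. $\mathbf{f}=(f_1^T,\dots,f_N^T)^T$ and $\frac{\partial\mathbf{f}(\mathbf 0)}{\partial\mathbf x}$ is its Jacobian at the origin. $s(\mathbf{A})$ is the maximum real part of an eigenvalue of $\mathbf{A}$. The generic SURQT model (6) is, for $i=1,\dots,N$, \[ \frac{dR_i}{dt}=T_i f_i^T(\mathbf{R})-R_i g_i^R(\mathbf{T})-\theta_iR_i,\qquad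 \frac{dT_i}{dt}=R_i g_i^R(\mathbf{T})-T_i f_i^T(\mathbf{R})+\delta_i(1-R_i-T_i), \] on $\Omega=\{(x_1,\dots,x_{2N})\in\mathbb{R}_+^{2N}: x_i+x_{N+i}\le1\}$. *)

From Stdlib Require Import Reals Relations.
From mathcomp Require Import ssreflect ssrfun ssrbool eqtype ssrnat fintype bigop.
Set Implicit Arguments. Unset Strict Implicit.
Open Scope R_scope.

Definition vec (N : nat) := 'I_N -> R.

Definition sumR (N : nat) (F : 'I_N -> R) : R := \big[Rplus/0]_(j < N) F j.

Definition upd (N : nat) (x : vec N) (j : 'I_N) (t : R) : vec N :=
  fun k => if k == j then t else x k.

Definition distv (N : nat) (x y : vec N) : R := sumR (fun j => Rabs (x j - y j)).

Definition has_grad (N : nat) (h : vec N -> R) (x gr : vec N) : Prop :=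
  forall eps, 0 < eps -> exists del, 0 < del /\
    forall y, distv y x < del ->
      Rabs (h y - h x - sumR (fun j => gr j * (y j - x j))) <= eps * distv y x.

Definition continuous_vec (N : nat) (h : vec N -> R) : Prop :=
  forall x eps, 0 < eps -> exists del, 0 < del /\
    forall y, distv y x < del -> Rabs (h y - h x) < eps.

Definition C2 (N : nat) (h : vec N -> R) : Prop :=
  exists (Dh : vec N -> vec N) (D2h : vec N -> 'I_N -> vec N),
    (forall x, has_grad h x (Dh x)) /\
    (forall x j, has_grad (fun y => Dh y j) x (D2h x j)) /\
    (forall j k, continuous_vec (fun x => D2h x j k)).

Definition partial_deriv (N : nat) (h : vec N -> R) (j : 'I_N) (x : vec N) (l : R) :=
  derivable_pt_lim (fun t => h (upd x j t)) (x j) l.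

Definition depends_on (N : nat) (h : vec N -> R) (j : 'I_N) : Prop :=
  exists x t, h (upd x j t) <> h x.

Definition strictly_incr_in (N : nat) (h : vec N -> R) (j : 'I_N) : Prop :=
  forall x s t, s < t -> h (upd x j s) < h (upd x j t).

Definition concave (N : nat) (h : vec N -> R) : Prop :=
  forall x y l, 0 <= l <= 1 ->
    l * h x + (1 - l) * h y <= h (fun k => l * x k + (1 - l) * y k).

Definition strongly_connected (N : nat) (E : 'I_N -> 'I_N -> Prop) : Prop :=
  forall i j, clos_refl_trans _ E i j.

(* (a + i b) is a (complex) eigenvalue of the real matrix A, with eigenvector
   u + i v <> 0, i.e. A(u + i v) = (a + i b)(u + i v). *)
Definition is_eigenvalue (N : nat) (A : 'I_N -> 'I_N -> R) (a b : R) : Prop :=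
  exists u v : vec N, (exists k, u k <> 0 \/ v k <> 0) /\
    forall i, sumR (fun j => A i j * u j) = a * u i - b * v i /\
              sumR (fun j => A i j * v j) = b * u i + a * v i.

Definition is_spectral_abscissa (N : nat) (A : 'I_N -> 'I_N -> R) (s : R) : Prop :=
  (exists b, is_eigenvalue A s b) /\ (forall a b, is_eigenvalue A a b -> a <= s).

Definition SURQT_solution (N : nat) (f g : 'I_N -> vec N -> R) (theta delta : 'I_N -> R)
    (Rs Ts : R -> vec N) : Prop :=
  (forall t i, 0 < t ->
     derivable_pt_lim (fun s => Rs s i) t
       (Ts t i * f i (Rs t) - Rs t i * g i (Ts t) - theta i * Rs t i) /\
     derivable_pt_lim (fun s => Ts s i) t
       (Rs t i * g i (Ts t) - Ts t i * f i (Rs t) + delta i * (1 - Rs t i - Ts t i))) /\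
  (forall i eps, 0 < eps -> exists del, 0 < del /\ forall t, 0 <= t < del ->
     Rabs (Rs t i - Rs 0 i) < eps /\ Rabs (Ts t i - Ts 0 i) < eps).

Definition in_Omega (N : nat) (x y : vec N) : Prop :=
  forall i, 0 <= x i /\ 0 <= y i /\ x i + y i <= 1.

Definition tends_at_infty (h : R -> R) (l : R) : Prop :=
  forall eps, 0 < eps -> exists M, forall t, M <= t -> Rabs (h t - l) < eps.

(* Concavity and f_i(0) = 0 give f_i(x) <= (J_f x)_i, so on Omega R is a
   subsolution of the cooperative linear system R' = (J_f - D_theta) R.  Since
   J_f - D_theta is a Metzler matrix with negative spectral abscissa, it has a
   positive vector w with (J_f - D_theta) w <= - kappa w, and a first-contact
   argument traps R below w (K e^{-kappa t} + eps), whence R -> 0.  Once R is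
   small, the equation for T_i pushes T_i above 1 - gamma at rate delta_i, while
   the forward invariance of Omega (the same first-contact argument, with an
   exponentially growing margin) keeps T_i <= 1. *)

From Stdlib Require Import Reals Lra Classical FunctionalExtensionality.
From mathcomp Require Import ssreflect ssrfun ssrbool eqtype ssrnat fintype bigop seq.
From mathcomp Require Import ssralg matrix order.
From mathcomp Require Import Rstruct.
Open Scope R_scope.

Section FiniteSums.
Context {N : nat}.
Implicit Types (F G : 'I_N -> R) (x : vec N).

Lemma sumR_ext F G : (forall j, F j = G j) -> sumR F = sumR G.
Proof. by move=> H; apply: eq_bigr => j _; exact: H. Qed.

Lemma sumR_le F G : (forall j, F j <= G j) -> sumR F <= sumR G.
Proof.
move=> H; rewrite /sumR; apply: (big_ind2 (fun a b => a <= b)); first lra.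
- by move=> ? ? ? ? ? ?; lra.
- by move=> j _; exact: H.
Qed.

Lemma sumR_add F G : sumR (fun j => F j + G j) = sumR F + sumR G.
Proof. exact: big_split. Qed.

Lemma sumR_scal c F : sumR (fun j => c * F j) = c * sumR F.
Proof. by rewrite /sumR -GRing.mulr_sumr. Qed.

Lemma sumR_opp F : sumR (fun j => - F j) = - sumR F.
Proof. by rewrite /sumR GRing.sumrN. Qed.

Lemma sumR_const c : sumR (fun _ : 'I_N => c) = INR N * c.
Proof. by rewrite /sumR GRing.sumr_const card_ord INRE RmultE GRing.mulr_natl. Qed.

Lemma sumR_ge0 F : (forall j, 0 <= F j) -> 0 <= sumR F.
Proof. by move=> H; apply: Rle_trans (sumR_le (fun _ => 0) F H); rewrite sumR_const; lra. Qed.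

Lemma sumR_ge_term F i : (forall j, 0 <= F j) -> F i <= sumR F.
Proof.
move=> H; rewrite /sumR (bigD1 i) //=.
have [s s_ge0 ->] : exists2 s, 0 <= s & \big[Rplus/0]_(j < N | j != i) F j = s.
  exists (\big[Rplus/0]_(j < N | j != i) F j) => //.
  by apply: (big_ind (fun a => 0 <= a)) => //; [lra | move=> *; lra].
lra.
Qed.

Lemma sumR_lt F G : (0 < N)%nat -> (forall j, F j < G j) -> sumR F < sumR G.
Proof.
move=> N_gt0 H; pose i0 := Ordinal N_gt0.
have -> : sumR G = sumR F + sumR (fun j => G j - F j).
  by rewrite -sumR_add; apply: sumR_ext => j; ring.
have : G i0 - F i0 <= sumR (fun j => G j - F j).
  by apply: sumR_ge_term => j; have := H j; lra.
have := H i0; lra.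
Qed.

Lemma Rabs_sumR_le F : Rabs (sumR F) <= sumR (fun j => Rabs (F j)).
Proof.
rewrite /sumR; apply: (big_ind2 (fun a b => Rabs a <= b)).
- by rewrite Rabs_R0; lra.
- by move=> a b c d H1 H2; apply: Rle_trans (Rabs_triang _ _) _; lra.
- by move=> j _; lra.
Qed.

Lemma exists_argmin F : (0 < N)%nat -> exists i, forall j, F i <= F j.
Proof.
move=> N_gt0; case: (@Order.TotalTheory.arg_minP _ _ _ (Ordinal N_gt0) xpredT F isT).
by move=> i _ Hi; exists i => j; apply/RleP; exact: Hi.
Qed.

Lemma exists_pos_lower_bound F : (0 < N)%nat -> (forall i, 0 < F i) ->
  exists m, 0 < m /\ forall i, m <= F i.
Proof.
move=> N_gt0 HF; have [i Hi] := exists_argmin F N_gt0.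
by exists (F i); split.
Qed.

Lemma average_close x l e : (0 < N)%nat -> (forall i, Rabs (x i - l) < e) ->
  Rabs (/ INR N * sumR x - l) < e.
Proof.
move=> N_gt0 Hx; have N0 : 0 < INR N by apply: lt_0_INR; apply/ltP.
have -> : / INR N * sumR x - l = / INR N * sumR (fun i => x i - l).
  by rewrite /Rminus sumR_add sumR_const; field; lra.
rewrite Rabs_mult Rabs_inv Rabs_pos_eq; last lra.
have := sumR_lt (fun i => Rabs (x i - l)) (fun _ => e) N_gt0 Hx.
rewrite sumR_const => H; have := Rabs_sumR_le (fun i => x i - l) => H'.
apply: (Rmult_lt_reg_l (INR N)) => //; rewrite -Rmult_assoc Rinv_r; lra.
Qed.

End FiniteSums.

Definition kd {N} (i j : 'I_N) : R := if i == j then 1 else 0.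

Definition mxv {N} (A : 'I_N -> 'I_N -> R) (x : vec N) : vec N :=
  fun i => sumR (fun j => A i j * x j).

Lemma sumR_kd {N} (i : 'I_N) (x : vec N) : sumR (fun j => kd i j * x j) = x i.
Proof.
rewrite /sumR (bigD1 i) //= big1 => [|j ji]; last by rewrite /kd eq_sym (negbTE ji); ring.
by rewrite /kd eqxx; ring.
Qed.

Lemma mxv_add_scalar {N} (A : 'I_N -> 'I_N -> R) a (x : vec N) i :
  mxv (fun i j => A i j + a * kd i j) x i = mxv A x i + a * x i.
Proof.
rewrite /mxv -(sumR_kd i x) -sumR_scal -sumR_add.
by apply: sumR_ext => j; ring.
Qed.

Lemma mxv_scalar_sub {N} (A : 'I_N -> 'I_N -> R) a (x : vec N) i :
  mxv (fun i j => a * kd i j - A i j) x i = a * x i - mxv A x i.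
Proof.
rewrite /mxv /Rminus -(sumR_kd i x) -sumR_scal -sumR_opp -sumR_add.
by apply: sumR_ext => j; ring.
Qed.

Lemma mxv_sub_diag {N} (A : 'I_N -> 'I_N -> R) (d x : vec N) i :
  mxv (fun i j => A i j - (if i == j then d i else 0)) x i = mxv A x i - d i * x i.
Proof.
rewrite /mxv /Rminus -(sumR_kd i x) -sumR_scal -sumR_opp -sumR_add.
by apply: sumR_ext => j; rewrite /kd; case: (i == j); ring.
Qed.

Lemma mxv_opp {N} (A : 'I_N -> 'I_N -> R) (x : vec N) i :
  mxv A (fun j => - x j) i = - mxv A x i.
Proof. by rewrite /mxv -sumR_opp; apply: sumR_ext => j; ring. Qed.

Lemma unitmx_of_injective (F : fieldType) n (K : 'M[F]_n) :
  (forall x : 'cV[F]_n, (K *m x = 0)%R -> x = 0%R) -> K \in unitmx.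
Proof.
move=> Kinj; rewrite unitmxE GRing.unitfE -det_tr; apply/negP => /det0P [v vn0 vK].
have : (K *m v^T = 0)%R by rewrite -[K]trmxK -trmx_mul vK trmx0.
move/Kinj => /(congr1 trmx); rewrite trmxK trmx0 => v0.
by rewrite v0 eqxx in vn0.
Qed.

Lemma mxv_inverse_of_injective {N : nat} (K : 'I_N -> 'I_N -> R) :
  (forall x : vec N, (forall i, mxv K x i = 0) -> forall i, x i = 0) ->
  exists G : 'I_N -> 'I_N -> R,
   (forall (b : vec N) i, mxv K (mxv G b) i = b i) /\
   (forall (x : vec N) i, mxv G (mxv K x) i = x i).
Proof.
move=> Kinj; pose Km := (\matrix_(i, j) K i j)%R : 'M[R]_N.
have uK : Km \in unitmx.
  apply: unitmx_of_injective => x Kx0; apply/matrixP => i j; rewrite [j]ord1 mxE.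
  apply: (Kinj (fun k => x k ord0)) => i'.
  have := congr1 (fun M : 'M[R]_(N,1) => M i' ord0) Kx0.
  rewrite /= !mxE => H; rewrite -[RHS]H; apply: eq_bigr => k _; by rewrite mxE.
exists (fun i j => invmx Km i j); split => [b i | x i].
- have := congr1 (fun M : 'M[R]_(N,1) => M i ord0) (mulmxA Km (invmx Km) (\col_k b k)%R).
  rewrite mulmxV // mul1mx /= !mxE => <-.
  rewrite /mxv /sumR; apply: eq_bigr => j _; rewrite !mxE; congr (_ * _)%R.
  by apply: eq_bigr => k _; rewrite mxE.
- have := congr1 (fun M : 'M[R]_(N,1) => M i ord0) (mulmxA (invmx Km) Km (\col_k x k)%R).
  rewrite mulVmx // mul1mx /= !mxE => <-.
  rewrite /mxv /sumR; apply: eq_bigr => j _; rewrite !mxE; congr (_ * _)%R.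
  by apply: eq_bigr => k _; rewrite !mxE.
Qed.

Lemma left_inverse_bound {N} {K G : 'I_N -> 'I_N -> R} :
  (forall (x : vec N) i, mxv G (mxv K x) i = x i) ->
  forall (x : vec N) B, (forall k, Rabs (mxv K x k) <= B) ->
  forall j, Rabs (x j) <= sumR (fun k => Rabs (G j k)) * B.
Proof.
move=> GK x B KxB j; rewrite -(GK x j) /mxv.
apply: Rle_trans (Rabs_sumR_le _) _; rewrite Rmult_comm -sumR_scal.
apply: sumR_le => k; rewrite Rabs_mult (Rmult_comm B).
by apply: Rmult_le_compat_l; [exact: Rabs_pos | exact: KxB].
Qed.

Section ZMatrix.
Context {N : nat} {K : 'I_N -> 'I_N -> R}.
Variable y : vec N.
Hypothesis N_gt0 : (0 < N)%nat.
Hypothesis K_offdiag_le0 : forall i j, i != j -> K i j <= 0.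
Hypothesis y_gt0 : forall i, 0 < y i.
Hypothesis Ky_gt0 : forall i, 0 < mxv K y i.

(* Compare x with its largest multiple l y below it: the contact row forces l >= 0. *)
Lemma Zmx_monotone x : (forall i, 0 <= mxv K x i) -> forall i, 0 <= x i.
Proof.
move=> Kx_ge0; have [i0 Hi0] := exists_argmin (fun i => x i / y i) N_gt0.
set l := x i0 / y i0 in Hi0.
have ly_le_x : forall j, l * y j <= x j.
  move=> j; have := Hi0 j; have := y_gt0 j => yj H.
  apply: (Rmult_le_reg_r (/ y j)); first exact: Rinv_0_lt_compat.
  rewrite Rmult_assoc Rinv_r; lra.
case: (Rle_lt_dec 0 l) => l_ge0.
  by move=> i; have := ly_le_x i; have := y_gt0 i; nra.
exfalso.
have xi0 : x i0 = l * y i0 by rewrite /l; field; have := y_gt0 i0; lra.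
have : mxv K x i0 <= sumR (fun j => l * (K i0 j * y j)).
  apply: sumR_le => j; case: (eqVneq i0 j) => [<-|ne]; first by rewrite xi0; lra.
  by have := K_offdiag_le0 _ _ ne; have := ly_le_x j; nra.
rewrite sumR_scal; have := Kx_ge0 i0; have := Ky_gt0 i0; rewrite /mxv; nra.
Qed.

Lemma Zmx_injective x : (forall i, mxv K x i = 0) -> forall i, x i = 0.
Proof.
move=> Kx0 i.
have := Zmx_monotone x (fun i => ltac:(rewrite Kx0; lra)) i.
have := Zmx_monotone (fun j => - x j) (fun i => ltac:(rewrite mxv_opp Kx0; lra)) i.
lra.
Qed.

Lemma Zmx_solve_ones : exists x, (forall i, 0 <= x i) /\ forall i, mxv K x i = 1.
Proof.
have [G [KG _]] := mxv_inverse_of_injective _ Zmx_injective.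
exists (mxv G (fun _ => 1)); split; last by move=> i; exact: KG.
by apply: Zmx_monotone => i; rewrite KG; lra.
Qed.

End ZMatrix.

Section Metzler.
Context {N : nat} {M : 'I_N -> 'I_N -> R}.
Hypothesis N_gt0 : (0 < N)%nat.
Hypothesis M_offdiag_ge0 : forall i j, i != j -> 0 <= M i j.
Hypothesis M_no_nonneg_eigenvector : forall a (u : vec N), 0 <= a ->
  (forall i, mxv M u i = a * u i) -> forall i, u i = 0.

(* P is a nonnegative shift of M.  The infimum r of the t admitting a
   supersolution is the Perron root of P; the lemma amounts to r < c. *)
Let c := 1 + sumR (fun i => Rabs (M i i)).
Let P i j := M i j + c * kd i j.
Let supersol t := exists y : vec N, (forall i, 0 <= y i) /\ forall i, mxv P y i < t * y i.

Let P_ge0 i j : 0 <= P i j.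
Proof.
rewrite /P /kd; case: (eqVneq i j) => [<-|ne]; last by have := M_offdiag_ge0 _ _ ne; lra.
have := sumR_ge_term (fun i => Rabs (M i i)) i (fun i => Rabs_pos _).
by have := Rle_abs (- M i i); rewrite Rabs_Ropp /c; lra.
Qed.

Let mxvP_ge0 (y : vec N) i : (forall j, 0 <= y j) -> 0 <= mxv P y i.
Proof. by move=> y_ge0; apply: sumR_ge0 => j; have := P_ge0 i j; have := y_ge0 j; nra. Qed.

Let supersol_pos t (y : vec N) : 0 < t -> (forall i, 0 <= y i) ->
  (forall i, mxv P y i < t * y i) -> forall i, 0 < y i.
Proof.
by move=> t_gt0 y_ge0 Py i; have := Py i; have := mxvP_ge0 y i y_ge0; have := y_ge0 i; nra.
Qed.

Let supersol_mono t t' : supersol t -> t <= t' -> supersol t'.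
Proof.
by move=> [y [y_ge0 Py]] tt'; exists y; split => // i; have := Py i; have := y_ge0 i; nra.
Qed.

Let supersol_large : exists T, supersol T.
Proof.
exists (1 + sumR (fun i => sumR (P i))), (fun _ => 1); split => [i|i]; first lra.
have -> : mxv P (fun _ => 1) i = sumR (P i) by apply: sumR_ext => j; ring.
have := sumR_ge_term (fun i => sumR (P i)) i (fun i => sumR_ge0 _ (P_ge0 i)).
lra.
Qed.

Let supersol_open t : supersol t -> exists e, 0 < e /\ supersol (t - e).
Proof.
move=> [y [y_ge0 Py]].
have [m [m_gt0 Hm]] := exists_pos_lower_bound (fun i => t * y i - mxv P y i) N_gt0
   (fun i => ltac:(have := Py i; lra)).
set Y := 1 + sumR y.
have y_lt_Y : forall i, y i < Y by move=> i; have := sumR_ge_term y i y_ge0; rewrite /Y; lra.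
have Y_gt0 : 0 < Y by have := y_lt_Y (Ordinal N_gt0); have := y_ge0 (Ordinal N_gt0); lra.
exists (m / Y); split; first exact: Rdiv_lt_0_compat.
exists y; split => // i; have /= Hmi := Hm i.
have : m / Y * y i = m * (y i / Y) by rewrite /Rdiv; ring.
have : y i / Y < 1.
  apply: (Rmult_lt_reg_r Y) => //; rewrite /Rdiv Rmult_assoc Rinv_l; [have := y_lt_Y i; lra | lra].
have := y_ge0 i; nra.
Qed.

(* The bound x <= C (1 + h X) obtained by inverting r I - P keeps h x small. *)
Let supersol_closed r : 0 <= r ->
  (forall x : vec N, (forall i, mxv (fun i j => r * kd i j - P i j) x i = 0) ->
     forall i, x i = 0) ->
  (forall t, r < t -> supersol t) -> supersol r.
Proof.
move=> r_ge0 Kr_inj above.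
have [G [_ GKr]] := mxv_inverse_of_injective _ Kr_inj.
set C := sumR (fun j => sumR (fun k => Rabs (G j k))).
have C_ge0 : 0 <= C by apply: sumR_ge0 => j; apply: sumR_ge0 => k; exact: Rabs_pos.
have NC_ge0 : 0 <= INR N * C by apply: Rmult_le_pos => //; exact: pos_INR.
set h := / (4 * (INR N * C + 1)).
have h_gt0 : 0 < h by apply: Rinv_0_lt_compat; lra.
have hNC : h * (4 * (INR N * C + 1)) = 1 by rewrite /h Rinv_l //; lra.
have [y [y_ge0 Py]] := above (r + h) ltac:(lra).
have [x [x_ge0 Ktx]] : exists x : vec N, (forall i, 0 <= x i) /\
    forall i, mxv (fun i j => (r + h) * kd i j - P i j) x i = 1.
  apply: (Zmx_solve_ones y) => //.
  - by move=> i j ne; rewrite /kd (negbTE ne); have := P_ge0 i j; lra.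
  - by apply: (supersol_pos (r + h)) => //; lra.
  - by move=> i; rewrite mxv_scalar_sub; have := Py i; lra.
have Krx : forall i, mxv (fun i j => r * kd i j - P i j) x i = 1 - h * x i.
  by move=> i; have := Ktx i; rewrite !mxv_scalar_sub; lra.
set X := sumR x.
have x_le_X : forall i, x i <= X by move=> i; exact: sumR_ge_term.
have x_le : forall j, x j <= C * (1 + h * X).
  move=> j; apply: Rle_trans (Rle_abs _) _.
  apply: Rle_trans (left_inverse_bound GKr x (1 + h * X) _ j) _.
    by move=> k; rewrite Krx; apply: Rabs_le; have := x_ge0 k; have := x_le_X k; nra.
  apply: Rmult_le_compat_r; first by have := sumR_ge0 _ x_ge0; rewrite -/X; nra.
  exact: (sumR_ge_term (fun j => sumR (fun k => Rabs (G j k))) j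
            (fun j => sumR_ge0 _ (fun k => Rabs_pos _))).
have X_le : X <= INR N * C * (1 + h * X).
  by apply: Rle_trans (sumR_le _ _ x_le) _; rewrite sumR_const; lra.
have hX_small : h * X <= 1 / 3.
  have : 0 <= h * X by have := sumR_ge0 _ x_ge0; rewrite -/X; nra.
  have : h * (INR N * C) <= 1 / 4 by nra.
  have := Rmult_le_compat_l h _ _ (Rlt_le _ _ h_gt0) X_le; nra.
exists x; split => // i.
by have := Krx i; rewrite mxv_scalar_sub; have := x_le_X i; have := x_ge0 i; nra.
Qed.

Lemma Metzler_stable_vector : exists w : vec N, (forall i, 0 < w i) /\ forall i, mxv M w i < 0.
Proof.
case: (classic (supersol c)) => [[y [y_ge0 Py]] | not_c].
  exists y; split; first by apply: (supersol_pos c) => //; rewrite /c;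
    have := sumR_ge0 _ (fun i => Rabs_pos (M i i)); lra.
  by move=> i; have := Py i; rewrite /P mxv_add_scalar; lra.
exfalso; have [T supT] := supersol_large.
set E := fun t => 0 <= t /\ ~ supersol t.
have E_bound : bound E.
  exists T => t [_ not_t]; apply: Rnot_lt_le => Tt; apply: not_t.
  exact: (supersol_mono _ _ supT (Rlt_le _ _ Tt)).
have c_ge1 : 1 <= c by rewrite /c; have := sumR_ge0 _ (fun i => Rabs_pos (M i i)); lra.
have [r [r_ub r_lub]] := completeness E E_bound (ex_intro _ c (conj (ltac:(lra) : 0 <= c) not_c)).
have c_le_r : c <= r by apply: r_ub; split => //; lra.
have above : forall t, r < t -> supersol t.
  move=> t rt; apply: NNPP => not_t; have : t <= r; last lra.
  by apply: r_ub; split => //; lra.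
have not_r : ~ supersol r.
  move=> /supersol_open [e [e_gt0 sup_re]]; have : r <= r - e; last lra.
  apply: r_lub => t [t_ge0 not_t]; apply: Rnot_lt_le => lt; apply: not_t.
  exact: (supersol_mono _ _ sup_re (Rlt_le _ _ lt)).
apply: not_r; apply: supersol_closed => // [|x Krx]; first lra.
apply: (M_no_nonneg_eigenvector (r - c)) => [|i]; first lra.
by have := Krx i; rewrite mxv_scalar_sub /P mxv_add_scalar; lra.
Qed.

End Metzler.

Section Monotone.
Context {N : nat}.
Variable h : vec N -> R.
Hypothesis h_incr : forall j, depends_on h j -> strictly_incr_in h j.

Lemma upd_le_mono x j s t : s <= t -> h (upd x j s) <= h (upd x j t).
Proof.
move=> st; case: (classic (depends_on h j)) => [dep | nodep].
  by case: st => [st | ->]; [left; exact: h_incr | right].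
have const : forall t, h (upd x j t) = h x.
  by move=> t'; apply: NNPP => ne; apply: nodep; exists x, t'.
by rewrite !const; right.
Qed.

(* Raise the coordinates of x to those of y one at a time. *)
Lemma monotone_of_incr x y : (forall k, x k <= y k) -> h x <= h y.
Proof.
move=> xy; pose z n : vec N := fun k => if (k < n)%nat then y k else x k.
have z_ge : forall n, h x <= h (z n).
  elim=> [|n IH].
    by right; congr h; apply: functional_extensionality => k; rewrite /z ltn0.
  apply: Rle_trans IH _; case: (ltnP n N) => nN.
    pose n' := Ordinal nN.
    have -> : z n = upd (z n) n' (x n').
      apply: functional_extensionality => k; rewrite /upd /z.
      by case: eqP => [->|//]; rewrite /= ltnn.
    have -> : z n.+1 = upd (z n) n' (y n').
      apply: functional_extensionality => k; rewrite /upd /z ltnS leq_eqVlt.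
      case: (eqVneq k n') => [->|ne]; first by rewrite /= eqxx.
      have -> // : (nat_of_ord k == n) = false.
      by apply/negP => /eqP e; move/eqP: ne; apply; apply: val_inj.
    exact: upd_le_mono.
  right; congr h; apply: functional_extensionality => k; rewrite /z.
  have k_lt : (k < n)%nat by apply: leq_trans (ltn_ord k) nN.
  by rewrite k_lt ltnS (ltnW k_lt).
have -> : y = z N by apply: functional_extensionality => k; rewrite /z ltn_ord.
exact: z_ge.
Qed.

End Monotone.

Lemma upd0_kd {N} (j k : 'I_N) t : upd (fun _ => 0) j t k = t * kd j k.
Proof. by rewrite /upd /kd eq_sym; case: eqP => _; ring. Qed.

Lemma distv_upd0 {N} (j : 'I_N) t : distv (upd (fun _ => 0) j t) (fun _ => 0) = Rabs t.
Proof.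
rewrite /distv -(sumR_kd j (fun _ => Rabs t)); apply: sumR_ext => k.
rewrite upd0_kd Rminus_0_r Rabs_mult /kd; case: eqP => _; rewrite ?Rabs_R1 ?Rabs_R0; ring.
Qed.

Lemma grad_dot_upd0 {N} (D : vec N) j t :
  sumR (fun k => D k * (upd (fun _ => 0) j t k - 0)) = D j * t.
Proof.
rewrite -(sumR_kd j (fun k => D k * t)); apply: sumR_ext => k.
rewrite upd0_kd /kd; case: eqP => [<-|_]; ring.
Qed.

Section ConcaveAtZero.
Context {N : nat} {h : vec N -> R} {D : vec N}.
Hypothesis h_concave : concave h.
Hypothesis h0 : h (fun _ => 0) = 0.
Hypothesis h_grad0 : has_grad h (fun _ => 0) D.

(* Along the segment [0, x], concavity keeps h above the chord, while
   differentiability at 0 forces h (l x) = l (D . x) + o(l). *)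
Lemma concave_le_tangent x : h x <= sumR (fun j => D j * x j).
Proof.
set S := sumR (fun j => Rabs (x j)).
have S_ge0 : 0 <= S by apply: sumR_ge0 => j; exact: Rabs_pos.
apply: Rnot_lt_le => lt; set gap := h x - sumR (fun j => D j * x j).
have gap_gt0 : 0 < gap by rewrite /gap; lra.
have [del [del_gt0 Hdel]] := h_grad0 (gap / (2 * (S + 1))) ltac:(apply: Rdiv_lt_0_compat; lra).
set l := del / (del + 2 * S + 1).
have l_gt0 : 0 < l by apply: Rdiv_lt_0_compat; lra.
have l_le1 : l <= 1.
  rewrite /l; apply: (Rmult_le_reg_r (del + 2 * S + 1)); first lra.
  rewrite /Rdiv Rmult_assoc Rinv_l; lra.
have lS : l * S < del.
  rewrite /l; apply: (Rmult_lt_reg_r (del + 2 * S + 1)); first lra.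
  have -> : del / (del + 2 * S + 1) * S * (del + 2 * S + 1) = del * S by field; lra.
  nra.
set y := fun k => l * x k + (1 - l) * 0.
have dist_y : distv y (fun _ => 0) = l * S.
  rewrite /distv /S -sumR_scal; apply: sumR_ext => j.
  by rewrite /y Rmult_0_r Rplus_0_r Rminus_0_r Rabs_mult Rabs_pos_eq //; lra.
have tangent_y : sumR (fun j => D j * (y j - 0)) = l * sumR (fun j => D j * x j).
  by rewrite -sumR_scal; apply: sumR_ext => j; rewrite /y; ring.
have := Hdel y ltac:(rewrite dist_y; lra).
rewrite dist_y tangent_y h0 => /(Rle_trans _ _ _ (Rle_abs _)).
have := h_concave x (fun _ => 0) l ltac:(lra); rewrite h0 -/y.
have : gap / (2 * (S + 1)) * (l * S) <= l * gap / 2.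
  rewrite /Rdiv; apply: (Rmult_le_reg_r (2 * (S + 1))); first lra.
  have -> : gap * / (2 * (S + 1)) * (l * S) * (2 * (S + 1)) = gap * l * S by field; lra.
  have -> : l * gap * / 2 * (2 * (S + 1)) = gap * l * (S + 1) by field.
  nra.
rewrite /gap in gap_gt0 *; nra.
Qed.

Lemma concave_const_lower eta : 0 <= eta <= 1 -> eta * h (fun _ => -1) <= h (fun _ => - eta).
Proof.
move=> eta01; have := h_concave (fun _ => -1) (fun _ => 0) eta eta01; rewrite h0.
have -> : (fun k => eta * (fun _ => -1) k + (1 - eta) * (fun _ => 0) k) = (fun _ : 'I_N => - eta).
  by apply: functional_extensionality => k /=; ring.
lra.
Qed.

Lemma grad_partial_deriv j : partial_deriv h j (fun _ => 0) (D j).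
Proof.
move=> eps eps_gt0; have [del [del_gt0 Hdel]] := h_grad0 (eps / 2) ltac:(lra).
exists (mkposreal del del_gt0) => t t_ne0 /= t_small.
have -> : upd (fun _ => 0) j 0 = (fun _ => 0).
  by apply: functional_extensionality => k; rewrite upd0_kd; ring.
have := Hdel (upd (fun _ => 0) j t) ltac:(rewrite distv_upd0; exact t_small).
rewrite Rplus_0_l distv_upd0 h0 grad_dot_upd0 => H.
have -> : (h (upd (fun _ => 0) j t) - 0) / t - D j = (h (upd (fun _ => 0) j t) - 0 - D j * t) / t.
  by field.
rewrite /Rdiv Rabs_mult Rabs_inv.
have := Rabs_pos_lt _ t_ne0 => t_abs.
apply: (Rmult_lt_reg_r (Rabs t)) => //; rewrite Rmult_assoc Rinv_l; nra.
Qed.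

Lemma grad_ge0 : (forall x y, (forall k, x k <= y k) -> h x <= h y) -> forall j, 0 <= D j.
Proof.
move=> h_mono j; apply: Rnot_lt_le => Dj_lt0.
have [del [del_gt0 Hdel]] := h_grad0 (- D j / 2) ltac:(lra).
have := Hdel (upd (fun _ => 0) j (del / 2)) ltac:(rewrite distv_upd0 Rabs_pos_eq; lra).
rewrite distv_upd0 (Rabs_pos_eq (del / 2)); last lra.
rewrite h0 grad_dot_upd0.
have : h (fun _ => 0) <= h (upd (fun _ => 0) j (del / 2)).
  by apply: h_mono => k; rewrite upd0_kd /kd; case: eqP => _; lra.
rewrite h0.
have := Rle_abs (h (upd (fun _ => 0) j (del / 2)) - 0 - D j * (del / 2)).
nra.
Qed.

End ConcaveAtZero.

Lemma concave_box_bounds {N} (h : vec N -> R) (x : vec N) eta :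
  (forall x y, (forall k, x k <= y k) -> h x <= h y) -> concave h -> h (fun _ => 0) = 0 ->
  0 <= eta <= 1 -> (forall k, - eta <= x k <= 3) ->
  eta * h (fun _ => -1) <= h x <= h (fun _ => 3).
Proof.
move=> h_mono h_concave h0 eta01 x_box; split; last by apply: h_mono => k; have := x_box k; lra.
apply: Rle_trans (concave_const_lower h_concave h0 eta eta01) _.
by apply: h_mono => k; have := x_box k; lra.
Qed.

Lemma exp_le_mono x y : x <= y -> exp x <= exp y.
Proof. by case=> [lt | ->]; [left; exact: exp_increasing | right]. Qed.

Lemma exp_neg_eventually_lt {k e : R} : 0 < k -> 0 < e ->
  exists M, forall t, M <= t -> exp (- (k * t)) < e.
Proof.
move=> k_gt0 e_gt0; exists ((1 - ln e) / k) => t tM.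
rewrite -[e in _ < e]exp_ln //; apply: exp_increasing.
have : (1 - ln e) / k * k <= t * k by apply: Rmult_le_compat_r; lra.
by rewrite /Rdiv Rmult_assoc Rinv_l; lra.
Qed.

Lemma Rle_0_of_le_small x : (forall lam, 0 < lam <= 1 -> x <= lam) -> x <= 0.
Proof.
move=> x_small; apply: Rnot_lt_le => x_gt0.
have := x_small (Rmin 1 (x / 2)) (conj (Rmin_pos 1 (x / 2) ltac:(lra) ltac:(lra)) (Rmin_l _ _)).
by have := Rmin_r 1 (x / 2); lra.
Qed.

Lemma derivable_pt_lim_exp_scal k t : derivable_pt_lim (fun s => exp (k * s)) t (k * exp (k * t)).
Proof.
rewrite Rmult_comm; apply: (derivable_pt_lim_comp (fun s => k * s) exp).
  by have := derivable_pt_lim_scal id k t 1 (derivable_pt_lim_id t); rewrite Rmult_1_r.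
exact: derivable_pt_lim_exp.
Qed.

Lemma exp_margin {L lam : R} t : 0 <= L -> 0 < lam ->
  exists eta : R -> R, [/\ forall s, 0 < eta s, forall s, s <= t -> eta s <= lam,
    eta t = lam & forall s, derivable_pt_lim eta s (L * eta s)].
Proof.
move=> L_ge0 lam_gt0; set c := lam * exp (- (L * t)).
have c_gt0 : 0 < c by apply: Rmult_lt_0_compat => //; exact: exp_pos.
exists (fun s => c * exp (L * s)); split.
- by move=> s; apply: Rmult_lt_0_compat => //; exact: exp_pos.
- move=> s st; rewrite /c Rmult_assoc -exp_plus.
  have : exp (- (L * t) + L * s) <= exp 0 by apply: exp_le_mono; nra.
  by rewrite exp_0; have := exp_pos (- (L * t) + L * s); nra.
- by rewrite /c Rmult_assoc -exp_plus (_ : - (L * t) + L * t = 0) ?exp_0; ring.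
- move=> s; have := derivable_pt_lim_scal _ c s _ (derivable_pt_lim_exp_scal L s).
  by rewrite (_ : c * (L * exp (L * s)) = L * (c * exp (L * s))) //; ring.
Qed.

Lemma derivable_pt_lim_continuous {f : R -> R} {t l : R} : derivable_pt_lim f t l ->
  forall eps, 0 < eps -> exists del, 0 < del /\
    forall s, Rabs (s - t) < del -> Rabs (f s - f t) < eps.
Proof.
move=> f_der eps eps_gt0.
have [del [del_gt0 Hdel]] := derivable_continuous_pt f t (exist _ l f_der) eps eps_gt0.
exists del; split => // s st; case: (Req_dec s t) => [->|ne]; first by rewrite Rminus_diag Rabs_R0.
by apply: Hdel; split => //; split => //; auto.
Qed.

Lemma derivable_pt_lim_pos_left {f : R -> R} {t l : R} : derivable_pt_lim f t l -> 0 < l ->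
  exists del, 0 < del /\ forall h, - del < h < 0 -> f (t + h) < f t.
Proof.
move=> f_der l_gt0; have [del Hdel] := f_der (l / 2) ltac:(lra).
exists del; split => [|h [h1 h2]]; first exact: cond_pos.
have /Rabs_def2 [_ H] := Hdel h ltac:(lra) ltac:(rewrite Rabs_left; lra).
have : f (t + h) - f t = (f (t + h) - f t) / h * h by field; lra.
nra.
Qed.

Definition right_cont (f : R -> R) a := forall eps, 0 < eps -> exists del, 0 < del /\
  forall t, a <= t < a + del -> Rabs (f t - f a) < eps.

Lemma right_cont_of_derivable {f : R -> R} {a l : R} : derivable_pt_lim f a l -> right_cont f a.
Proof.
move=> f_der eps eps_gt0.
have [del [del_gt0 Hdel]] := derivable_pt_lim_continuous f_der eps eps_gt0.
by exists del; split => // t ta; apply: Hdel; rewrite Rabs_pos_eq; lra.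
Qed.

Lemma right_cont_const c a : right_cont (fun _ => c) a.
Proof. by move=> eps eps_gt0; exists 1; split => [|t _]; [lra | rewrite Rminus_diag Rabs_R0]. Qed.

Lemma right_cont_plus f g a : right_cont f a -> right_cont g a -> right_cont (fun t => f t + g t) a.
Proof.
move=> f_rc g_rc eps eps_gt0.
have [d1 [d1_gt0 H1]] := f_rc (eps / 2) ltac:(lra).
have [d2 [d2_gt0 H2]] := g_rc (eps / 2) ltac:(lra).
exists (Rmin d1 d2); split => [|t ta]; first exact: Rmin_pos.
have := Rmin_l d1 d2; have := Rmin_r d1 d2 => m2 m1.
have /Rabs_def2 [? ?] := H1 t ltac:(lra); have /Rabs_def2 [? ?] := H2 t ltac:(lra).
apply: Rabs_def1; lra.
Qed.

Lemma right_cont_scal c f a : right_cont f a -> right_cont (fun t => c * f t) a.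
Proof.
move=> f_rc eps eps_gt0; have c_abs := Rabs_pos c.
have [d [d_gt0 Hd]] := f_rc (eps / (Rabs c + 1)) ltac:(apply: Rdiv_lt_0_compat; lra).
exists d; split => // t ta; rewrite -Rmult_minus_distr_l Rabs_mult.
have := Hd t ta; have := Rabs_pos (f t - f a) => ? H.
have : eps / (Rabs c + 1) * (Rabs c + 1) = eps by field; lra.
nra.
Qed.

Lemma right_cont_opp f a : right_cont f a -> right_cont (fun t => - f t) a.
Proof.
move=> f_rc eps eps_gt0; have [d [d_gt0 Hd]] := f_rc eps eps_gt0.
exists d; split => // t ta; have -> : - f t - - f a = - (f t - f a) by ring.
by rewrite Rabs_Ropp; exact: Hd.
Qed.

Lemma exists_common_delta {I : finType} (P : I -> R -> Prop) :
  (forall j d d', 0 < d' <= d -> P j d -> P j d') ->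
  (forall j, exists d, 0 < d /\ P j d) -> exists d, 0 < d /\ forall j, P j d.
Proof.
move=> P_mono P_ex.
suff /(_ (enum I)) [d [d_gt0 Hd]] : forall s : seq I, exists d, 0 < d /\ forall j, j \in s -> P j d.
  by exists d; split => // j; apply: Hd; rewrite mem_enum.
elim=> [|j s [d [d_gt0 Hd]]]; first by exists 1; split => //; lra.
have [dj [dj_gt0 Hj]] := P_ex j.
exists (Rmin d dj); split => [|k]; first exact: Rmin_pos.
rewrite in_cons => /orP [/eqP ->|ks].
  by apply: (P_mono _ dj) => //; split; [exact: Rmin_pos | exact: Rmin_r].
by apply: (P_mono _ d); [split; [exact: Rmin_pos | exact: Rmin_l] | exact: Hd].
Qed.

Section Barrier.
Variables (I : finType) (H dH : I -> R -> R) (a b : R).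
Hypothesis H_deriv : forall k t, a < t <= b -> derivable_pt_lim (H k) t (dH k t).
Hypothesis H_right_cont : forall k, right_cont (H k) a.
Hypothesis H_pos_a : forall k, 0 < H k a.

Let pos_near c : (forall k, right_cont (H k) c) -> (forall k, 0 < H k c) ->
  exists d, 0 < d /\ forall k t, c <= t < c + d -> 0 < H k t.
Proof.
move=> rc pos; apply: (exists_common_delta (fun k d => forall t, c <= t < c + d -> 0 < H k t)).
  by move=> k d d' dd' Hd t ct; apply: Hd; lra.
move=> k; have [d [d_gt0 Hd]] := rc k (H k c) (pos k).
by exists d; split => // t ct; have /Rabs_def2 := Hd t ct; lra.
Qed.

(* tau is the supremum of the times up to which every H j stays positive. *)
Lemma first_contact : a <= b -> (exists k t, a <= t <= b /\ H k t <= 0) ->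
  exists k tau, a < tau <= b /\ H k tau = 0 /\ (forall j, 0 <= H j tau) /\
    (forall j s, a <= s < tau -> 0 < H j s).
Proof.
move=> ab [k0 [t0 [t0ab Hk0]]].
pose S t := a <= t <= b /\ forall j s, a <= s <= t -> 0 < H j s.
have Sa : S a by split => [|j s sa]; [lra | have -> : s = a by lra].
have S_bound : bound S by exists b => t [[_ ?] _].
have [tau [tau_ub tau_lub]] := completeness S S_bound (ex_intro _ a Sa).
have tau_le_b : tau <= b by apply: tau_lub => t [[_ ?] _].
have before : forall j s, a <= s < tau -> 0 < H j s.
  move=> j s sa; apply: NNPP => not_pos; have : tau <= s; last lra.
  by apply: tau_lub => t [_ St]; apply: Rnot_lt_le => st; apply: not_pos; apply: St; lra.
have a_lt_b : a < b.
  case: ab => // ab; have t0a : t0 = a by lra.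
  by rewrite t0a in Hk0; have := H_pos_a k0; lra.
have a_lt_tau : a < tau.
  have [d [d_gt0 Hd]] := pos_near a H_right_cont H_pos_a.
  have a_lt_m : a < Rmin (a + d / 2) b by apply: Rmin_glb_lt; lra.
  have : Rmin (a + d / 2) b <= tau; last lra.
  apply: tau_ub; have := Rmin_l (a + d / 2) b; have := Rmin_r (a + d / 2) b.
  by split => [|j s sa]; [lra | apply: Hd; lra].
have H_cont : forall j, derivable_pt_lim (H j) tau (dH j tau) by move=> j; apply: H_deriv; lra.
have H_ge0 : forall j, 0 <= H j tau.
  move=> j; apply: Rnot_lt_le => neg.
  have [del [del_gt0 Hdel]] := derivable_pt_lim_continuous (H_cont j) (- H j tau) ltac:(lra).
  set s := tau - Rmin (del / 2) ((tau - a) / 2).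
  have := Rmin_l (del / 2) ((tau - a) / 2); have := Rmin_r (del / 2) ((tau - a) / 2).
  have := Rmin_pos (del / 2) ((tau - a) / 2) ltac:(lra) ltac:(lra) => ? ? ?.
  have /Rabs_def2 := Hdel s ltac:(rewrite /s Rabs_left; lra).
  by have := before j s ltac:(rewrite /s; lra); lra.
case: (classic (forall j, 0 < H j tau)) => [all_pos | /not_all_ex_not [k Hk]]; last first.
  by exists k, tau; split; [lra | split; [have := H_ge0 k; lra | split]].
exfalso; have [d [d_gt0 Hd]] := pos_near tau (fun j => right_cont_of_derivable (H_cont j)) all_pos.
have pos_upto : forall c, tau <= c < tau + d -> forall j s, a <= s <= c -> 0 < H j s.
  move=> c c_tau j s sa; case: (Rlt_le_dec s tau) => st; [apply: before | apply: Hd]; lra.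
case: (Rle_lt_dec b tau) => [b_le_tau | tau_lt_b].
  by have := pos_upto tau ltac:(lra) k0 t0 ltac:(lra); lra.
have tau_lt_m : tau < Rmin (tau + d / 2) b by apply: Rmin_glb_lt; lra.
have : Rmin (tau + d / 2) b <= tau; last lra.
apply: tau_ub; have := Rmin_l (tau + d / 2) b; have := Rmin_r (tau + d / 2) b.
by split; [lra | apply: pos_upto; lra].
Qed.

Theorem barrier : a <= b ->
  (forall k t, a < t <= b -> H k t = 0 -> (forall j, 0 <= H j t) ->
     (forall j s, a <= s < t -> 0 < H j s) -> 0 < dH k t) ->
  forall k t, a <= t <= b -> 0 < H k t.
Proof.
move=> ab dH_pos k t tab; apply: Rnot_le_lt => Hkt.
have [k' [tau [tau_ab [Hk'0 [H_ge0 before]]]]] :=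
  first_contact ab (ex_intro _ k (ex_intro _ t (conj tab Hkt))).
have [del [del_gt0 Hdel]] :=
  derivable_pt_lim_pos_left (H_deriv k' tau tau_ab) (dH_pos k' tau tau_ab Hk'0 H_ge0 before).
set h := Rmin (del / 2) ((tau - a) / 2).
have := Rmin_l (del / 2) ((tau - a) / 2); have := Rmin_r (del / 2) ((tau - a) / 2).
have := Rmin_pos (del / 2) ((tau - a) / 2) ltac:(lra) ltac:(lra) => ? ? ?.
have := Hdel (- h) ltac:(rewrite /h; lra); have := before k' (tau + - h) ltac:(rewrite /h; lra).
lra.
Qed.

End Barrier.

Lemma mul_box_lower {T F eta A : R} : - eta <= T <= 3 -> - (eta * A) <= F <= A ->
  0 <= eta <= 1 -> 0 <= A -> - (3 * eta * A) <= T * F.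
Proof.
move=> T_box F_box eta01 A_ge0; case: (Rle_lt_dec 0 F) => F_sign.
  have : - eta * F <= T * F by apply: Rmult_le_compat_r; lra.
  nra.
have : 3 * F <= T * F by nra.
nra.
Qed.

Section Rates.
Context {N : nat}.
Hypothesis N_gt0 : (0 < N)%nat.
Context {theta delta : 'I_N -> R}.
Hypothesis theta_gt0 : forall i, 0 < theta i.
Hypothesis delta_gt0 : forall i, 0 < delta i.
Context {f g : 'I_N -> vec N -> R}.
Hypothesis f_mono : forall i x y, (forall k, x k <= y k) -> f i x <= f i y.
Hypothesis g_mono : forall i x y, (forall k, x k <= y k) -> g i x <= g i y.
Hypothesis f0 : forall i, f i (fun _ => 0) = 0.
Hypothesis g0 : forall i, g i (fun _ => 0) = 0.
Hypothesis f_concave : forall i, concave (f i).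
Hypothesis g_concave : forall i, concave (g i).

Definition rateR (x y : vec N) i := y i * f i x - x i * g i y - theta i * x i.
Definition rateT (x y : vec N) i := x i * g i y - y i * f i x + delta i * (1 - x i - y i).

Definition near_Omega eta (x y : vec N) :=
  forall k, - eta <= x k /\ - eta <= y k /\ x k + y k <= 1 + eta.

(* On the eta-neighbourhood of Omega (eta <= 1), f and g are bounded by
   box_bound and the vector field points back into Omega up to escape_rate * eta. *)
Definition box_bound := sumR (fun i =>
  - f i (fun _ => -1) + f i (fun _ => 3) - g i (fun _ => -1) + g i (fun _ => 3)).
Definition escape_rate := 1 + 4 * box_bound + sumR delta + sumR theta.

Let box_terms i : 0 <= - f i (fun _ => -1) /\ 0 <= f i (fun _ => 3) /\
  0 <= - g i (fun _ => -1) /\ 0 <= g i (fun _ => 3).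
Proof.
have := f_mono i (fun _ => -1) (fun _ => 0) (fun _ => ltac:(lra)).
have := f_mono i (fun _ => 0) (fun _ => 3) (fun _ => ltac:(lra)).
have := g_mono i (fun _ => -1) (fun _ => 0) (fun _ => ltac:(lra)).
have := g_mono i (fun _ => 0) (fun _ => 3) (fun _ => ltac:(lra)).
by rewrite f0 g0; lra.
Qed.

Let fg_near_Omega_bounds {eta} {x y : vec N} i : 0 < eta <= 1 -> near_Omega eta x y ->
  [/\ - (eta * box_bound) <= f i x <= box_bound, - (eta * box_bound) <= g i y <= box_bound,
      - eta <= x i <= 3 & - eta <= y i <= 3].
Proof.
move=> eta01 near.
have x_box : forall k, - eta <= x k <= 3 by move=> k; have := near k; lra.
have y_box : forall k, - eta <= y k <= 3 by move=> k; have := near k; lra.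
have [fl fu] := concave_box_bounds (f i) x eta (f_mono i) (f_concave i) (f0 i) ltac:(lra) x_box.
have [gl gu] := concave_box_bounds (g i) y eta (g_mono i) (g_concave i) (g0 i) ltac:(lra) y_box.
have := sumR_ge_term (fun i => - f i (fun _ => -1) + f i (fun _ => 3) - g i (fun _ => -1)
  + g i (fun _ => 3)) i (fun j => ltac:(have := box_terms j; lra)).
rewrite -/box_bound /= => A_ge; have := box_terms i => ?.
by split; [nra | nra | exact: x_box | exact: y_box].
Qed.

Let box_bound_ge0 : 0 <= box_bound.
Proof. by apply: sumR_ge0 => j; have := box_terms j; lra. Qed.

Let scaled_lower_bound eta F : 0 <= eta <= 1 -> - (eta * box_bound) <= F ->
  - (eta * box_bound) <= eta * F.
Proof.
move=> eta01 F_ge; have := box_bound_ge0 => A_ge0.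
have : eta * (- (eta * box_bound)) <= eta * F by apply: Rmult_le_compat_l; lra.
have : eta * (eta * box_bound) <= 1 * (eta * box_bound) by apply: Rmult_le_compat_r; nra.
lra.
Qed.

Lemma rateR_lower_face eta (x y : vec N) i : 0 < eta <= 1 -> near_Omega eta x y ->
  x i = - eta -> 0 < rateR x y i + escape_rate * eta.
Proof.
move=> eta01 near xi.
have [f_b g_b x_b y_b] := fg_near_Omega_bounds i eta01 near.
have := mul_box_lower y_b f_b ltac:(lra) box_bound_ge0.
have := scaled_lower_bound eta (g i y) ltac:(lra) (proj1 g_b).
have : 0 <= sumR delta * eta by have := sumR_ge0 _ (fun j => Rlt_le _ _ (delta_gt0 j)); nra.
have : 0 <= sumR theta * eta by have := sumR_ge0 _ (fun j => Rlt_le _ _ (theta_gt0 j)); nra.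
have : 0 < theta i * eta by have := theta_gt0 i; nra.
rewrite /rateR /escape_rate xi; nra.
Qed.

Lemma rateT_lower_face eta (x y : vec N) i : 0 < eta <= 1 -> near_Omega eta x y ->
  y i = - eta -> 0 < rateT x y i + escape_rate * eta.
Proof.
move=> eta01 near yi.
have [f_b g_b x_b y_b] := fg_near_Omega_bounds i eta01 near.
have := mul_box_lower x_b g_b ltac:(lra) box_bound_ge0.
have := scaled_lower_bound eta (f i x) ltac:(lra) (proj1 f_b).
have : delta i * eta <= sumR delta * eta.
  by have := sumR_ge_term delta i (fun j => Rlt_le _ _ (delta_gt0 j)); nra.
have : 0 <= sumR theta * eta by have := sumR_ge0 _ (fun j => Rlt_le _ _ (theta_gt0 j)); nra.
have : - (delta i * eta) <= delta i * (1 - x i - y i) by have := near i; have := delta_gt0 i; nra.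
rewrite /rateT /escape_rate yi; nra.
Qed.

Lemma rates_upper_face eta (x y : vec N) i : 0 < eta <= 1 -> near_Omega eta x y ->
  x i + y i = 1 + eta -> 0 < escape_rate * eta - rateR x y i - rateT x y i.
Proof.
move=> eta01 near xyi.
have : 0 <= sumR delta * eta by have := sumR_ge0 _ (fun j => Rlt_le _ _ (delta_gt0 j)); nra.
have : theta i * eta <= sumR theta * eta.
  by have := sumR_ge_term theta i (fun j => Rlt_le _ _ (theta_gt0 j)); nra.
have : - (theta i * eta) <= theta i * x i by have := near i; have := theta_gt0 i; nra.
have : delta i * (1 - x i - y i) = - (delta i * eta).
  by rewrite (_ : 1 - x i - y i = - eta); [ring | lra].
have : 0 <= box_bound * eta by have := box_bound_ge0; nra.
have : 0 < delta i * eta by have := delta_gt0 i; nra.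
rewrite /rateR /rateT /escape_rate; lra.
Qed.

Context {Rs Ts : R -> vec N}.
Hypothesis Hsol : SURQT_solution f g theta delta Rs Ts.
Hypothesis Hinit : in_Omega (Rs 0) (Ts 0).

Let Rs_deriv t i : 0 < t -> derivable_pt_lim (fun s => Rs s i) t (rateR (Rs t) (Ts t) i).
Proof. by move=> t_gt0; exact: (Hsol.1 t i t_gt0).1. Qed.

Let Ts_deriv t i : 0 < t -> derivable_pt_lim (fun s => Ts s i) t (rateT (Rs t) (Ts t) i).
Proof. by move=> t_gt0; exact: (Hsol.1 t i t_gt0).2. Qed.

Let Rs_right_cont i : right_cont (fun s => Rs s i) 0.
Proof.
move=> e e_gt0; have [d [d_gt0 Hd]] := Hsol.2 i e e_gt0.
by exists d; split => // t; rewrite Rplus_0_l => t0; exact: (Hd t t0).1.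
Qed.

Let Ts_right_cont i : right_cont (fun s => Ts s i) 0.
Proof.
move=> e e_gt0; have [d [d_gt0 Hd]] := Hsol.2 i e e_gt0.
by exists d; split => // t; rewrite Rplus_0_l => t0; exact: (Hd t t0).2.
Qed.

(* The margin eta s = lam e^{L (s - t)} grows at the escape rate L, faster than
   the vector field can push a solution out of the eta-neighbourhood of Omega. *)
Lemma near_Omega_invariant t lam : 0 <= t -> 0 < lam <= 1 -> near_Omega lam (Rs t) (Ts t).
Proof.
move=> t_ge0 lam01; set L := escape_rate.
have L_ge0 : 0 <= L.
  rewrite /L /escape_rate; have := box_bound_ge0.
  have := sumR_ge0 _ (fun j => Rlt_le _ _ (delta_gt0 j)).
  have := sumR_ge0 _ (fun j => Rlt_le _ _ (theta_gt0 j)); lra.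
have [eta [eta_gt0 eta_le eta_t eta_deriv]] := exp_margin t L_ge0 (proj1 lam01).
pose H (p : option bool * 'I_N) s := match p.1 with
  | Some true => Rs s p.2 + eta s | Some false => Ts s p.2 + eta s
  | None => 1 + eta s - Rs s p.2 - Ts s p.2 end.
pose dH (p : option bool * 'I_N) s := match p.1 with
  | Some true => rateR (Rs s) (Ts s) p.2 + L * eta s
  | Some false => rateT (Rs s) (Ts s) p.2 + L * eta s
  | None => 0 + L * eta s - rateR (Rs s) (Ts s) p.2 - rateT (Rs s) (Ts s) p.2 end.
have H_pos : forall p s, 0 <= s <= t -> 0 < H p s.
  apply: (barrier _ H dH 0 t) => //.
  - move=> [[[]|] i] s s_t /=.
    + by apply: derivable_pt_lim_plus; [apply: Rs_deriv; lra | exact: eta_deriv].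
    + by apply: derivable_pt_lim_plus; [apply: Ts_deriv; lra | exact: eta_deriv].
    + apply: derivable_pt_lim_minus; last by apply: Ts_deriv; lra.
      apply: derivable_pt_lim_minus; last by apply: Rs_deriv; lra.
      exact: derivable_pt_lim_plus (derivable_pt_lim_const 1 s) (eta_deriv s).
  - have eta_rc := right_cont_of_derivable (eta_deriv 0).
    move=> [[[]|] i] /=.
    + exact: right_cont_plus (Rs_right_cont i) eta_rc.
    + exact: right_cont_plus (Ts_right_cont i) eta_rc.
    + apply: right_cont_plus; last exact: right_cont_opp (Ts_right_cont i).
      apply: right_cont_plus; last exact: right_cont_opp (Rs_right_cont i).
      exact: right_cont_plus (right_cont_const 1 0) eta_rc.
  - by move=> [[[]|] i]; rewrite /H /=; have := Hinit i; have := eta_gt0 0; lra.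
  - move=> [b i] s s_t H0 H_ge0 _.
    have near : near_Omega (eta s) (Rs s) (Ts s).
      move=> k; have := H_ge0 (Some true, k); have := H_ge0 (Some false, k).
      by have := H_ge0 (None, k); rewrite /H /=; lra.
    have eta01 : 0 < eta s <= 1 by have := eta_le s ltac:(lra); have := eta_gt0 s; lra.
    case: b H0 => [[]|]; rewrite /H /dH /= => H0.
    + by apply: rateR_lower_face near _; lra.
    + by apply: rateT_lower_face near _; lra.
    + by have := rates_upper_face _ _ _ i eta01 near ltac:(lra); rewrite /L; lra.
move=> i; have := H_pos (Some true, i) t; have := H_pos (Some false, i) t.
have := H_pos (None, i) t; rewrite /H /= eta_t; lra.
Qed.

Lemma Omega_invariant t : 0 <= t -> in_Omega (Rs t) (Ts t).
Proof.
move=> t_ge0 i.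
have near lam (lam01 : 0 < lam <= 1) := near_Omega_invariant t lam t_ge0 lam01 i.
have := Rle_0_of_le_small (- Rs t i) (fun lam l01 => ltac:(have := near lam l01; lra)).
have := Rle_0_of_le_small (- Ts t i) (fun lam l01 => ltac:(have := near lam l01; lra)).
have := Rle_0_of_le_small (Rs t i + Ts t i - 1) (fun lam l01 => ltac:(have := near lam l01; lra)).
lra.
Qed.

Lemma f_ge0_Omega {x y : vec N} i : in_Omega x y -> 0 <= f i x.
Proof. by move=> xy; rewrite -(f0 i); apply: f_mono => k; exact: (xy k).1. Qed.

Lemma g_ge0_Omega {x y : vec N} i : in_Omega x y -> 0 <= g i y.
Proof. by move=> xy; rewrite -(g0 i); apply: g_mono => k; exact: (xy k).2.1. Qed.

Lemma rateT_ge_Omega {x y : vec N} i : in_Omega x y ->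
  delta i * (1 - x i - y i) - f i x <= rateT x y i.
Proof.
move=> xy; have := f_ge0_Omega i xy; have := g_ge0_Omega i xy; have := xy i.
by rewrite /rateT; nra.
Qed.

Context {Jf : 'I_N -> 'I_N -> R}.
Hypothesis f_le_tangent : forall i x, f i x <= mxv Jf x i.
Hypothesis Jf_ge0 : forall i j, 0 <= Jf i j.

Lemma rateR_le_Omega {x y : vec N} i : in_Omega x y ->
  rateR x y i <= mxv Jf x i - theta i * x i.
Proof.
move=> xy; have := f_le_tangent i x; have := f_ge0_Omega i xy; have := g_ge0_Omega i xy.
by have := xy i; rewrite /rateR; nra.
Qed.

Lemma mxv_le_scaled (x : vec N) b (w : vec N) i : (forall j, 0 <= x j <= b * w j) ->
  mxv Jf x i <= b * mxv Jf w i.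
Proof.
move=> xw; rewrite /mxv -sumR_scal; apply: sumR_le => j.
by have := xw j; have := Jf_ge0 i j; nra.
Qed.

Context {w : vec N} {kappa : R}.
Hypothesis w_gt0 : forall i, 0 < w i.
Hypothesis kappa_gt0 : 0 < kappa.
Hypothesis w_decay : forall i, mxv Jf w i - theta i * w i <= - (kappa * w i).

Let K := sumR (fun j => / w j).

Let w_K i : 1 <= w i * K.
Proof.
have := sumR_ge_term (fun j => / w j) i (fun j => Rlt_le _ _ (Rinv_0_lt_compat _ (w_gt0 j))).
have : w i * / w i = 1 by field; have := w_gt0 i; lra.
by rewrite -/K; have := w_gt0 i; nra.
Qed.

(* w (K e^{-kappa t} + eps) is a strict supersolution of R' = (J_f - D_theta) R. *)
Lemma R_decay eps t : 0 < eps -> 0 <= t ->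
  forall i, Rs t i < w i * (K * exp (- kappa * t) + eps).
Proof.
move=> eps_gt0 t_ge0.
pose H i s := w i * (K * exp (- kappa * s) + eps) - Rs s i.
pose dH i s := w i * (K * (- kappa * exp (- kappa * s)) + 0) - rateR (Rs s) (Ts s) i.
have H_pos : forall i s, 0 <= s <= t -> 0 < H i s.
  apply: (barrier _ H dH 0 t) => //.
  - move=> i s s_t; apply: derivable_pt_lim_minus; last by apply: Rs_deriv; lra.
    apply: derivable_pt_lim_scal; apply: derivable_pt_lim_plus; last exact: derivable_pt_lim_const.
    by apply: derivable_pt_lim_scal; exact: derivable_pt_lim_exp_scal.
  - move=> i; apply: right_cont_plus; last exact: right_cont_opp.
    apply: right_cont_scal; apply: right_cont_plus; last exact: right_cont_const.
    exact: right_cont_scal (right_cont_of_derivable (derivable_pt_lim_exp_scal _ 0)).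
  - move=> i; rewrite /H Rmult_0_r exp_0 Rmult_1_r.
    by have := Hinit i; have := w_K i; have := w_gt0 i; nra.
  - move=> i s s_t H0 H_ge0 _; rewrite /H in H0 H_ge0; rewrite /dH.
    set e := exp (- kappa * s) in H0 H_ge0 *; set b := K * e + eps in H0 H_ge0 *.
    have e_gt0 : 0 < e by exact: exp_pos.
    have b_gt0 : 0 < b by have := w_K i; have := w_gt0 i; rewrite /b; nra.
    have Omega_s := Omega_invariant s ltac:(lra).
    have R_le : mxv Jf (Rs s) i <= b * mxv Jf w i.
      by apply: mxv_le_scaled => j; have := H_ge0 j; have := (Omega_s j).1; lra.
    have Ri : Rs s i = w i * b by lra.
    have rateR_le : rateR (Rs s) (Ts s) i <= b * (mxv Jf w i - theta i * w i).
      have := rateR_le_Omega i Omega_s.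
      have : theta i * Rs s i = b * (theta i * w i) by rewrite Ri; ring.
      lra.
    have : b * (mxv Jf w i - theta i * w i) <= b * (- (kappa * w i)).
      by apply: Rmult_le_compat_l; [lra | exact: w_decay].
    have : w i * (K * (- kappa * e) + 0) + b * (kappa * w i) = kappa * w i * eps.
      by rewrite /b; ring.
    have : 0 < kappa * w i * eps by apply: Rmult_lt_0_compat => //; exact: Rmult_lt_0_compat.
    lra.
by move=> i; have := H_pos i t ltac:(lra); rewrite /H; lra.
Qed.

Lemma R_to_0 e : 0 < e -> exists M, forall t, M <= t -> forall i, 0 <= Rs t i < e.
Proof.
move=> e_gt0; pose i0 := Ordinal N_gt0; set W := sumR w.
have w_le_W : forall i, w i <= W by move=> i; apply: sumR_ge_term => j; left; exact: w_gt0.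
have W_gt0 : 0 < W by have := w_le_W i0; have := w_gt0 i0; lra.
have K_gt0 : 0 < K by have := w_K i0; have := w_gt0 i0; nra.
have [M HM] := exp_neg_eventually_lt kappa_gt0 (Rdiv_lt_0_compat e (2 * W * K) e_gt0 ltac:(nra)).
exists (Rmax 0 M) => t tM i; have := Rmax_l 0 M; have := Rmax_r 0 M => ? ?.
split; first exact: (Omega_invariant t ltac:(lra) i).1.
have := R_decay (e / (2 * W)) t (Rdiv_lt_0_compat e (2 * W) e_gt0 ltac:(lra)) ltac:(lra) i.
rewrite (_ : - kappa * t = - (kappa * t)); last ring.
have := HM t ltac:(lra); set E := exp (- (kappa * t)) => E_lt.
have E_gt0 : 0 < E by exact: exp_pos.
have : w i * K * E <= e / 2.
  have : W * K * E < W * K * (e / (2 * W * K)) by apply: Rmult_lt_compat_l; nra.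
  have -> : W * K * (e / (2 * W * K)) = e / 2 by field; lra.
  by have := w_le_W i; have := w_gt0 i; nra.
have : w i * (e / (2 * W)) <= e / 2.
  have -> : w i * (e / (2 * W)) = (w i / W) * (e / 2) by field; lra.
  have : w i / W <= 1.
    by apply: (Rmult_le_reg_r W) => //; rewrite /Rdiv Rmult_assoc Rinv_l; [have := w_le_W i; lra | lra].
  have : 0 < w i / W by apply: Rdiv_lt_0_compat; [exact: w_gt0 | lra].
  nra.
have := w_gt0 i; nra.
Qed.

(* At a contact time the recovery delta_i (1 - R_i - T_i) >= delta_i (gam - eta)
   beats the loss T_i f_i(R) <= eta * sum_j Jf i j. *)
Lemma T_lower_bound gam eta t0 i : 0 < gam -> 0 < t0 ->
  eta * (sumR (Jf i) + delta i) < delta i * gam ->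
  (forall s j, t0 <= s -> Rs s j <= eta) ->
  forall t, t0 <= t -> 1 - gam - exp (- (delta i * (t - t0))) < Ts t i.
Proof.
move=> gam_gt0 t0_gt0 eta_small R_small t tt0.
set d := delta i; set c := exp (d * t0); have d_gt0 : 0 < d := delta_gt0 i.
pose H (_ : unit) s := Ts s i - 1 + gam + c * exp (- d * s).
pose dH (_ : unit) s := rateT (Rs s) (Ts s) i - 0 + 0 + c * (- d * exp (- d * s)).
have H_deriv : forall s, 0 < s -> derivable_pt_lim (H tt) s (dH tt s).
  move=> s s_gt0; apply: derivable_pt_lim_plus.
    apply: derivable_pt_lim_plus; last exact: derivable_pt_lim_const.
    by apply: derivable_pt_lim_minus; [exact: Ts_deriv | exact: derivable_pt_lim_const].
  by apply: derivable_pt_lim_scal; exact: derivable_pt_lim_exp_scal.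
have c_t0 : c * exp (- d * t0) = 1.
  by rewrite /c -exp_plus (_ : d * t0 + - d * t0 = 0) ?exp_0 //; ring.
have H_pos : forall k s, t0 <= s <= t -> 0 < H k s.
  apply: (barrier _ H dH t0 t) => //.
  - by move=> [] s s_t; apply: H_deriv; lra.
  - by move=> []; exact: right_cont_of_derivable (H_deriv t0 t0_gt0).
  - by move=> []; rewrite /H c_t0; have := Omega_invariant t0 ltac:(lra) i; lra.
  - move=> [] s s_t H0 _ _; rewrite /H in H0; rewrite /dH.
    set E := c * exp (- d * s) in H0.
    have Omega_s := Omega_invariant s ltac:(lra).
    have f_le : f i (Rs s) <= eta * sumR (Jf i).
      apply: Rle_trans (f_le_tangent i (Rs s)) _.
      have -> : sumR (Jf i) = mxv Jf (fun _ => 1) i by apply: sumR_ext => j; ring.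
      by apply: mxv_le_scaled => j; have := R_small s j ltac:(lra); have := (Omega_s j).1; lra.
    have -> : c * (- d * exp (- d * s)) = - (d * E) by rewrite /E; ring.
    have : d * (gam + E - eta) <= d * (1 - Rs s i - Ts s i).
      by apply: Rmult_le_compat_l; [lra | have := R_small s i ltac:(lra); lra].
    have := rateT_ge_Omega i Omega_s.
    by rewrite /d in eta_small *; lra.
have := H_pos tt t ltac:(lra); rewrite /H.
have -> : c * exp (- d * t) = exp (- (d * (t - t0))) by rewrite /c -exp_plus; congr exp; ring.
lra.
Qed.

Lemma T_to_1 gam : 0 < gam -> exists M, forall t, M <= t -> forall i, 1 - gam < Ts t i <= 1.
Proof.
move=> gam_gt0.
have J_ge0 : forall i, 0 <= sumR (Jf i) by move=> i; apply: sumR_ge0; exact: Jf_ge0.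
have [m [m_gt0 Hm]] := exists_pos_lower_bound
  (fun i => delta i * gam / (2 * (sumR (Jf i) + delta i))) N_gt0
  (fun i => ltac:(have := J_ge0 i; have := delta_gt0 i; move=> ? ?; apply: Rdiv_lt_0_compat; nra)).
have eta_small : forall i, m / 2 * (sumR (Jf i) + delta i) < delta i * (gam / 2).
  move=> i; have := Hm i; have := J_ge0 i; have := delta_gt0 i => ? ? Hmi.
  have := Rmult_le_compat_r (sumR (Jf i) + delta i) _ _ ltac:(lra) Hmi.
  have -> : delta i * gam / (2 * (sumR (Jf i) + delta i)) * (sumR (Jf i) + delta i)
    = delta i * (gam / 2) by field; lra.
  by have := Rmult_lt_0_compat _ _ m_gt0 (ltac:(lra) : 0 < sumR (Jf i) + delta i); lra.
have [M0 HM0] := R_to_0 (m / 2) ltac:(lra).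
have [dmin [dmin_gt0 Hdmin]] := exists_pos_lower_bound delta N_gt0 delta_gt0.
have [M1 HM1] := exp_neg_eventually_lt dmin_gt0 (ltac:(lra) : 0 < gam / 2).
set t0 := Rmax 1 M0; have t0_ge1 : 1 <= t0 := Rmax_l 1 M0; have M0_t0 : M0 <= t0 := Rmax_r 1 M0.
exists (t0 + Rmax 0 M1) => t tM i.
have := Rmax_l 0 M1; have := Rmax_r 0 M1 => M1_le M1_ge0.
split; last by have := Omega_invariant t ltac:(lra) i; lra.
have := T_lower_bound (gam / 2) (m / 2) t0 i ltac:(lra) (ltac:(lra) : 0 < t0) (eta_small i)
  (fun s j s_t0 => Rlt_le _ _ (proj2 (HM0 s ltac:(lra) j))) t ltac:(lra).
have : exp (- (delta i * (t - t0))) <= exp (- (dmin * (t - t0))).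
  by apply: exp_le_mono; have := Hdmin i; nra.
have := HM1 (t - t0) ltac:(lra); lra.
Qed.

Lemma SURQT_converges :
  (forall i, tends_at_infty (fun t => Rs t i) 0 /\ tends_at_infty (fun t => Ts t i) 1) /\
  tends_at_infty (fun t => / INR N * sumR (fun i => Rs t i)) 0 /\
  tends_at_infty (fun t => / INR N * sumR (fun i => Ts t i)) 1.
Proof.
have R_close : forall e, 0 < e -> exists M, forall t, M <= t -> forall i, Rabs (Rs t i - 0) < e.
  move=> e e_gt0; have [M HM] := R_to_0 e e_gt0; exists M => t tM i.
  by have [R_ge0 R_lt] := HM t tM i; rewrite Rminus_0_r Rabs_pos_eq.
have T_close : forall e, 0 < e -> exists M, forall t, M <= t -> forall i, Rabs (Ts t i - 1) < e.
  move=> e e_gt0; have [M HM] := T_to_1 e e_gt0; exists M => t tM i.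
  by have [T_gt T_le] := HM t tM i; rewrite Rabs_left1; lra.
split; [|split] => [i|e e_gt0|e e_gt0].
- by split=> e e_gt0; [have [M HM] := R_close e e_gt0 | have [M HM] := T_close e e_gt0];
    exists M => t tM; exact: HM.
- by have [M HM] := R_close e e_gt0; exists M => t tM; exact: average_close (HM t tM).
- by have [M HM] := T_close e e_gt0; exists M => t tM; exact: average_close (HM t tM).
Qed.

End Rates.

Lemma has_grad_of_partial_deriv {N} {h : vec N -> R} {J : vec N} :
  C2 h -> h (fun _ => 0) = 0 -> (forall j, partial_deriv h j (fun _ => 0) (J j)) ->
  has_grad h (fun _ => 0) J.
Proof.
move=> [Dh [_ [Dh_grad _]]] h0 hJ.
have -> // : J = Dh (fun _ => 0).
apply: functional_extensionality => j.
exact: (uniqueness_limite _ _ _ _ (hJ j) (grad_partial_deriv h0 (Dh_grad _) j)).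
Qed.

Lemma spectral_abscissa_neg_no_eigenvector {N} {A : 'I_N -> 'I_N -> R} {s : R} :
  is_spectral_abscissa A s -> s < 0 ->
  forall a (u : vec N), 0 <= a -> (forall i, mxv A u i = a * u i) -> forall i, u i = 0.
Proof.
move=> [_ s_max] s_lt0 a u a_ge0 Au k; apply: NNPP => uk.
have : a <= s; last lra.
apply: (s_max a 0); exists u, (fun _ => 0); split => [|i]; first by exists k; left.
split; first by rewrite [LHS]Au; ring.
by rewrite (sumR_ext _ (fun _ => 0 * 0)) ?sumR_const; [ring | move=> j; ring].
Qed.

Lemma exists_decay_weight {N} {M : 'I_N -> 'I_N -> R} : (0 < N)%nat ->
  (forall i j, i != j -> 0 <= M i j) ->
  (forall a (u : vec N), 0 <= a -> (forall i, mxv M u i = a * u i) -> forall i, u i = 0) ->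
  exists (w : vec N) kappa, (forall i, 0 < w i) /\ 0 < kappa /\
    forall i, mxv M w i <= - (kappa * w i).
Proof.
move=> N_gt0 M_offdiag M_no_eigen.
have [w [w_gt0 Mw_lt0]] := Metzler_stable_vector N_gt0 M_offdiag M_no_eigen.
have [kappa [kappa_gt0 Hk]] := exists_pos_lower_bound (fun i => - mxv M w i / w i) N_gt0
  (fun i => Rdiv_lt_0_compat (- mxv M w i) (w i) ltac:(have := Mw_lt0 i; lra) (w_gt0 i)).
exists w, kappa; split => //; split => // i.
have := Rmult_le_compat_r (w i) _ _ (Rlt_le _ _ (w_gt0 i)) (Hk i).
by rewrite /Rdiv Rmult_assoc Rinv_l; [lra | have := w_gt0 i; lra].
Qed.

Theorem theorem3 (N : nat) (HN : (0 < N)%nat)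
  (ER ET : 'I_N -> 'I_N -> Prop)
  (HER : strongly_connected ER) (HET : strongly_connected ET)
  (theta delta : 'I_N -> R)
  (Htheta : forall i, 0 < theta i) (Hdelta : forall i, 0 < delta i)
  (f g : 'I_N -> vec N -> R)
  (C1f : forall i j, depends_on (f i) j <-> ER i j)
  (C1g : forall i j, depends_on (g i) j <-> ET i j)
  (C2f : forall i, f i (fun _ => 0) = 0) (C2g : forall i, g i (fun _ => 0) = 0)
  (C3f : forall i, C2 (f i)) (C3g : forall i, C2 (g i))
  (C4f : forall i j, ER i j -> strictly_incr_in (f i) j)
  (C4g : forall i j, ET i j -> strictly_incr_in (g i) j)
  (C5f : forall i, concave (f i)) (C5g : forall i, concave (g i))
  (Jf : 'I_N -> 'I_N -> R)
  (HJf : forall i j, partial_deriv (f i) j (fun _ => 0) (Jf i j))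
  (Hs : exists s, is_spectral_abscissa
          (fun i j => Jf i j - (if i == j then theta i else 0)) s /\ s < 0)
  (Rs Ts : R -> vec N)
  (Hsol : SURQT_solution f g theta delta Rs Ts)
  (Hinit : in_Omega (Rs 0) (Ts 0)) :
  (forall i, tends_at_infty (fun t => Rs t i) 0 /\ tends_at_infty (fun t => Ts t i) 1) /\
  tends_at_infty (fun t => / INR N * sumR (fun i => Rs t i)) 0 /\
  tends_at_infty (fun t => / INR N * sumR (fun i => Ts t i)) 1.
Proof.
have f_mono i := monotone_of_incr (f i) (fun j dep => C4f i j ((C1f i j).1 dep)).
have g_mono i := monotone_of_incr (g i) (fun j dep => C4g i j ((C1g i j).1 dep)).
have f_grad i : has_grad (f i) (fun _ => 0) (Jf i).
  exact: has_grad_of_partial_deriv (C3f i) (C2f i) (HJf i).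
have Jf_ge0 i := grad_ge0 (C2f i) (f_grad i) (f_mono i).
have [s [s_abscissa s_lt0]] := Hs.
have [w [kappa [w_gt0 [kappa_gt0 w_decay]]]] :=
  exists_decay_weight (M := fun i j => Jf i j - (if i == j then theta i else 0)) HN
  (fun i j ij => ltac:(rewrite /= (negbTE ij) Rminus_0_r; exact: Jf_ge0))
  (spectral_abscissa_neg_no_eigenvector s_abscissa s_lt0).
apply: (SURQT_converges HN Htheta Hdelta f_mono g_mono C2f C2g C5f C5g Hsol Hinit
  (fun i => concave_le_tangent (C5f i) (C2f i) (f_grad i)) Jf_ge0 w_gt0 kappa_gt0).
by move=> i; rewrite -mxv_sub_diag; exact: w_decay.
Qed.
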